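(* Let $M\ge2$, $\kappa>0$ and $0<p_1<p_2<\cdots<p_M$. For $i=1,\dots,M$ define $\eta_i(c)=c\log p_i-\log(1+\kappa p_i^{-1})$ for $c\in\mathbb R$, and for $i\neq j$ let $$c_{i,j}=\frac{\log(1+\kappa p_i^{-1})-\log(1+\kappa p_j^{-1})}{\log p_i-\log p_j},$$ so that $\eta_i(c_{i,j})=\eta_j(c_{i,j})$. For $i<j$ let $\sigma_{i,j}=|\{l:\ \eta_l(c_{i,j})<\eta_i(c_{i,j})=\eta_j(c_{i,j})\}|$ and $I(s)=\{(i,j):1\le i<j\le M,\ \sigma_{i,j}=s\}$. Then for every $0\le s\le M-2$, $$I(s)=\{(i,\,M-s+i-1):\ i=1,\dots,s+1\}.$$ *)

From HB Require Import structures.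
From mathcomp Require Import all_boot all_order all_algebra.
From mathcomp Require Import all_classical all_reals all_analysis.
Set Implicit Arguments. Unset Strict Implicit. Unset Printing Implicit Defensive.
Import Order.TTheory GRing.Theory Num.Theory.
Local Open Scope classical_set_scope.
Local Open Scope ring_scope.

(* indices are natural numbers 1..M (1-based, as in the paper) *)
Definition eta (R : realType) (kappa : R) (p : nat -> R) (i : nat) (c : R) : R :=
  c * ln (p i) - ln (1 + kappa * (p i)^-1).

Definition cij (R : realType) (kappa : R) (p : nat -> R) (i j : nat) : R :=
  (ln (1 + kappa * (p i)^-1) - ln (1 + kappa * (p j)^-1)) / (ln (p i) - ln (p j)).

Definition sigma (R : realType) (M : nat) (kappa : R) (p : nat -> R) (i j : nat) : nat :=
  count (fun l => eta kappa p l (cij kappa p i j) < eta kappa p i (cij kappa p i j))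
        (iota 1 M).

Definition Iset (R : realType) (M : nat) (kappa : R) (p : nat -> R) (s : nat)
  : set (nat * nat) :=
  [set ij | [/\ (1 <= ij.1)%N, (ij.1 < ij.2)%N, (ij.2 <= M)%N
             & sigma M kappa p ij.1 ij.2 = s]].

From Pilot Require Import Defs.
From HB Require Import structures.
From mathcomp Require Import all_boot all_order all_algebra.
From mathcomp Require Import all_classical all_reals all_analysis.
From mathcomp Require Import lra zify.
Set Implicit Arguments. Unset Strict Implicit. Unset Printing Implicit Defensive.
Import Order.TTheory GRing.Theory Num.Theory.
Local Open Scope classical_set_scope.
Local Open Scope ring_scope.

(* With x_l = ln p_l we have ln (1 + kappa / p_l) = F (x_l) for the strictly
   convex function F y = ln (e^y + kappa) - y, and c_{i,j} is the slope of the
   chord of F between x_i and x_j.  Hence eta_l (c_{i,j}) < eta_i (c_{i,j})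
   says that the point (x_l, F x_l) lies strictly above the line through that
   chord, which by strict convexity happens exactly when x_l lies outside
   [x_i, x_j].  So sigma_{i,j} = (i - 1) + (M - j), and sigma_{i,j} = s pins
   down j = M - s + i - 1. *)

Section StrictConvexity.
Variable R : realType.

Lemma secant_slope_lt (f df : R -> R) :
  (forall x : R, is_derive x (1 : R) f (df x)) -> {homo df : x y / x < y} ->
  forall a b c, a < b -> b < c ->
  (f b - f a) * (c - b) < (f c - f b) * (b - a).
Proof.
move=> f_df df_incr a b c ab bc.
have f_mvt u v : u < v -> exists2 y, y \in `]u, v[ & f v - f u = df y * (v - u).
  move=> uv; apply: MVT uv (fun x _ => f_df x) _.
  by apply: derivable_within_continuous => x _; case: (f_df x).
have [y1 y1_ab ->] := f_mvt a b ab.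
have [y2 y2_bc ->] := f_mvt b c bc.
have y12 : y1 < y2.
  move: y1_ab y2_bc; rewrite !in_itv /= => /andP[_ y1b] /andP[by2 _].
  exact: lt_trans y1b by2.
have := df_incr _ _ y12.
have : 0 < (b - a) * (c - b) by rewrite mulr_gt0 // subr_gt0.
nra.
Qed.

Lemma chord_gap_lt (f : R -> R) :
  (forall a b c, a < b -> b < c -> (f b - f a) * (c - b) < (f c - f b) * (b - a)) ->
  forall u v c x, u < v -> c * (u - v) = f u - f v ->
  (c * x - f x < c * u - f u) = (x < u) || (v < x).
Proof.
move=> slope_lt u v c x uv chord.
case: (ltgtP x u) => [xu|ux|->] /=.
- by apply/idP; have := slope_lt _ _ _ xu uv; nra.
- case: (ltgtP x v) => [xv|vx|->] /=.
  + by apply/negbTE; rewrite -leNgt; have := slope_lt _ _ _ ux xv; nra.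
  + by apply/idP; have := slope_lt _ _ _ uv vx; nra.
  + by apply/negbTE; rewrite -leNgt le_eqVlt; apply/orP; left; apply/eqP; nra.
- by rewrite ltxx ltNge (ltW uv).
Qed.

End StrictConvexity.

Section LogShift.
Variables (R : realType) (k : R).
Hypothesis k_gt0 : 0 < k.

Definition ln_expR_shift (y : R) : R := ln (expR y + k) - y.

Lemma ln_expR_shift_ln (x : R) : 0 < x -> ln_expR_shift (ln x) = ln (1 + k * x^-1).
Proof.
move=> x_gt0; rewrite /ln_expR_shift lnK ?posrE //.
have -> : 1 + k * x^-1 = (x + k) * x^-1 by rewrite mulrDl divff ?gt_eqF.
by rewrite lnM ?posrE ?invr_gt0 ?addr_gt0 // lnV ?posrE.
Qed.

Lemma is_derive_ln_expR_shift (y : R) :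
  is_derive y 1 ln_expR_shift ((expR y + k)^-1 * expR y - 1).
Proof.
have d_inner : is_derive y 1 (fun z => expR z + k) (expR y).
  by have := @is_deriveD R R R (@expR R) (cst k) y 1 (expR y) 0; rewrite addr0; apply.
have d_ln : is_derive (expR y + k) 1 (@ln R) (expR y + k)^-1.
  by apply: is_derive1_ln; rewrite addr_gt0 // expR_gt0.
have d_comp := @is_derive1_comp R (@ln R) (fun z => expR z + k) y _ _ d_ln d_inner.
exact: is_deriveB.
Qed.

Lemma ln_expR_shift_derive_incr :
  {homo (fun y : R => (expR y + k)^-1 * expR y - 1) : u v / u < v}.
Proof.
move=> u v uv; rewrite ltrD2r.
have eu := expR_gt0 u; have ev := expR_gt0 v.
have : expR u < expR v by rewrite ltr_expR.
rewrite ![_^-1 * _]mulrC ltr_pdivrMr ?addr_gt0 // mulrAC ltr_pdivlMr ?addr_gt0 //.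
move=> euv; have : expR u * k < expR v * k by rewrite ltr_pM2r.
rewrite !mulrDr [expR v * expR u]mulrC; lra.
Qed.

Lemma ln_expR_shift_slope_lt (a b c : R) : a < b -> b < c ->
  (ln_expR_shift b - ln_expR_shift a) * (c - b) <
  (ln_expR_shift c - ln_expR_shift b) * (b - a).
Proof.
apply: (@secant_slope_lt R _ (fun y => (expR y + k)^-1 * expR y - 1)).
  exact: is_derive_ln_expR_shift.
exact: ln_expR_shift_derive_incr.
Qed.

End LogShift.

Lemma count_outside_iota (M i j : nat) : (1 <= i <= j)%N -> (j <= M)%N ->
  count (fun l => (l < i) || (j < l))%N (iota 1 M) = (i - 1 + (M - j))%N.
Proof.
move=> /andP[i_ge1 ij] jM.
have -> : iota 1 M = iota 1 (i - 1) ++ iota i (j - i + 1) ++ iota j.+1 (M - j).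
  have {1}-> : M = (i - 1 + (j - i + 1 + (M - j)))%N by lia.
  rewrite (iotaD 1) (iotaD (1 + (i - 1))).
  by congr (_ ++ iota _ _ ++ iota _ _); lia.
rewrite !count_cat.
rewrite (@eq_in_count _ _ predT (iota 1 _)); last first.
  by move=> l; rewrite mem_iota => /andP[_ ?]; apply/orP; left; lia.
rewrite (@eq_in_count _ _ pred0 (iota i _)); last first.
  by move=> l; rewrite mem_iota => /andP[? ?] /=; apply/negbTE/negP => /orP[]; lia.
rewrite (@eq_in_count _ _ predT (iota j.+1 _)); last first.
  by move=> l; rewrite mem_iota => /andP[? _]; apply/orP; right; lia.
by rewrite !count_predT count_pred0 !size_iota add0n.
Qed.

Section Sigma.
Variables (R : realType) (M : nat) (k : R) (p : nat -> R).
Hypotheses (k_gt0 : 0 < k) (p1_gt0 : 0 < p 1%N).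
Hypothesis p_incr : forall i : nat, (1 <= i)%N -> (i < M)%N -> p i < p i.+1.

Let in_range := [pred l : nat | (1 <= l <= M)%N].

Lemma p_mono : {in in_range &, {mono p : a b / (a < b)%N >-> a < b}}.
Proof.
apply: leW_mono_in; apply: le_mono_in.
apply: Order.NatMonotonyTheory.homo_ltn_lt_in => [a b|l].
  by rewrite !inE => /andP[a1 _] /andP[_ bM] l /andP[al lb]; apply/andP; split; lia.
by rewrite !inE => /andP[l1 _] /andP[_ lM]; apply: p_incr.
Qed.

Lemma p_gt0 (l : nat) : l \in in_range -> 0 < p l.
Proof.
rewrite inE => /andP[l_ge1 lM]; have [l_le1|l_gt1] := leqP l 1%N.
  by have -> : l = 1%N by lia.
by apply: lt_trans p1_gt0 _; rewrite p_mono // inE; apply/andP; split; lia.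
Qed.

Lemma ln_p_mono : {in in_range &, {mono (fun l => ln (p l)) : a b / (a < b)%N >-> a < b}}.
Proof. by move=> a b a_in b_in /=; rewrite ltr_ln ?posrE ?p_gt0 // p_mono. Qed.

Lemma sigma_eq (i j : nat) : (1 <= i)%N -> (i < j)%N -> (j <= M)%N ->
  sigma M k p i j = (i - 1 + (M - j))%N.
Proof.
move=> i_ge1 ij jM.
have i_in : i \in in_range by rewrite inE; apply/andP; lia.
have j_in : j \in in_range by rewrite inE; apply/andP; lia.
have shiftE l : l \in in_range ->
    ln (1 + k * (p l)^-1) = ln_expR_shift k (ln (p l)).
  by move=> l_in; rewrite ln_expR_shift_ln ?p_gt0.
have x_ij : ln (p i) < ln (p j) by rewrite (ln_p_mono i_in j_in).
have chord : cij k p i j * (ln (p i) - ln (p j)) =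
    ln_expR_shift k (ln (p i)) - ln_expR_shift k (ln (p j)).
  by rewrite -(shiftE i) // -(shiftE j) // /cij divfK // subr_eq0 (lt_eqF x_ij).
rewrite /sigma -(@count_outside_iota M i j) ?i_ge1 ?(ltnW ij) //.
apply: eq_in_count => l; rewrite mem_iota => l_range.
have l_in : l \in in_range by rewrite inE; apply/andP; lia.
rewrite /Defs.eta !shiftE //=.
rewrite (chord_gap_lt (ln_expR_shift_slope_lt k_gt0) (ln (p l)) x_ij chord).
by rewrite (ln_p_mono l_in i_in) (ln_p_mono j_in l_in).
Qed.

End Sigma.

Theorem lemma4 (R : realType) (M : nat) (kappa : R) (p : nat -> R) :
  (2 <= M)%N -> 0 < kappa -> 0 < p 1%N ->
  (forall i : nat, (1 <= i)%N -> (i < M)%N -> p i < p i.+1) ->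
  forall s : nat, (s <= M - 2)%N ->
  Iset M kappa p s =
  [set ij : nat * nat | exists2 i : nat, (1 <= i <= s.+1)%N & ij = (i, M - s + i - 1)%N].
Proof.
move=> M_ge2 kappa_gt0 p1_gt0 p_incr s s_le.
rewrite /Iset; apply/seteqP; split => -[i j] /=.
- move=> [i_ge1 ij jM]; rewrite sigma_eq // => <-.
  by exists i; [apply/andP; split; lia | congr pair; lia].
- move=> [i0 /andP[i0_ge1 i0_le] [-> ->]].
  have ij : (i0 < M - s + i0 - 1)%N by lia.
  have jM : (M - s + i0 - 1 <= M)%N by lia.
  by split => //; rewrite sigma_eq //; lia.
Qed.
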